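(* Let $1\le p<2$, $f\in\mathcal H_0$, $u$ the solution of $\partial_tu+\partial J(u)\ni0$, $u(0)=f$, with extinction time $T_{\mathrm{ex}}$, and $w(t):=u(t)/a(t)$ with $a(t)=(1-t/T_{\mathrm{ex}})^{1/(2-p)}$, $0\le t<T_{\mathrm{ex}}$. Assume $T_{\mathrm{ex}}=\frac{\|f\|^{2-p}}{(2-p)\lambda_1}$ and that an asymptotic profile exists, i.e. there are $w_*\in\mathcal H$ and $t_k\nearrow T_{\mathrm{ex}}$ with $w(t_k)\to w_*$ strongly. Then $\Lambda(t)=\lambda_1$ for all $0\le t<T_{\mathrm{ex}}$, and hence $f$ is a ground state.
   Context: $\mathcal H$ is a real Hilbert space with inner product $\langle\cdot,\cdot\rangle$ and norm $\|\cdot\|$. $J:\mathcal H\to\mathbb R\cup\{\infty\}$ is convex, lower semicontinuous, proper, with dense effective domain, and absolutely $p$-homogeneous: $J(cu)=|c|^pJ(u)$ for $c\ne0$, $J(0)=0$. $\partial J(u)=\{\zeta: J(u)+\langle\zeta,v-u\rangle\le J(v)\ \forall v\}$; $\mathcal N(J)=\{u:J(u)=0\}$; $\mathcal H_0:=\mathcal N(J)^\perp\setminus\{0\}$. Rayleigh quotient $R(u):=pJ(u)/\|u\|^p$; standing coercivity assumption $\lambda_1:=\inf_{u\in\mathcal H_0}R(u)>0$; a ground state is a minimizer of $R$ over $\mathcal H_0$. The gradient flow solution (Brezis) is the unique continuous $u:[0,\infty)\to\mathcal H$, Lipschitz on $[\delta,\infty)$ for all $\delta>0$, right-differentiable on $(0,\infty)$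 with $u(0)=f$ and $\partial_t^+u(t)=-\zeta(t)$, $\zeta(t)$ the minimal-norm element of $\partial J(u(t))$. $T_{\mathrm{ex}}:=\inf\{T>0:u(t)=0\ \forall t\ge T\}$. $\Lambda(t):=R(u(t))$ for $0\le t<T_{\mathrm{ex}}$. *)

From HB Require Import structures.
From mathcomp Require Import all_boot all_order all_algebra.
From mathcomp Require Import all_classical all_reals all_analysis.
Set Implicit Arguments. Unset Strict Implicit. Unset Printing Implicit Defensive.
Import Order.TTheory GRing.Theory Num.Theory.
Import numFieldNormedType.Exports.
Local Open Scope classical_set_scope.
Local Open Scope ring_scope.

Section Setting.
Variables (R : realType) (V : completeNormedModType R).

(* [ip] is an inner product on V inducing the norm of V: V is a real Hilbert space. *)
Definition is_inner_product (ip : V -> V -> R) : Prop :=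
  (forall u v, ip u v = ip v u) /\
  (forall u v w, ip (u + v) w = ip u w + ip v w) /\
  (forall (c : R) u v, ip (c *: u) v = c * ip u v) /\
  (forall u, `|u| ^+ 2 = ip u u).

Definition admissible_functional (p : R) (J : V -> \bar R) : Prop :=
  (forall u, (-oo < J u)%E) /\
  (exists u, (J u < +oo)%E) /\
  (forall u v (t : R), 0 < t < 1 ->
     (J ((1 - t) *: u + t *: v)%R <= (1 - t)%:E * J u + t%:E * J v)%E) /\
  (forall u (a : R), (a%:E < J u)%E -> \forall v \near u, (a%:E < J v)%E) /\
  closure [set u | (J u < +oo)%E] = setT /\
  (forall (c : R) u, c != 0 -> J (c *: u)%R = ((`|c| `^ p)%:E * J u)%E) /\
  J 0 = 0%E.

Definition H0 (ip : V -> V -> R) (J : V -> \bar R) : set V :=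
  [set u | u != 0 /\ forall n, J n = 0%E -> ip u n = 0].

Definition rayleigh (p : R) (J : V -> \bar R) (u : V) : \bar R :=
  (p%:E * J u * ((`|u| `^ p)^-1)%:E)%E.

Definition lambda1 (ip : V -> V -> R) (p : R) (J : V -> \bar R) : \bar R :=
  ereal_inf [set rayleigh p J u | u in H0 ip J].

Definition ground_state (ip : V -> V -> R) (p : R) (J : V -> \bar R) (f : V) : Prop :=
  H0 ip J f /\ forall v, H0 ip J v -> (rayleigh p J f <= rayleigh p J v)%E.

Definition subdiff (ip : V -> V -> R) (J : V -> \bar R) (u : V) : set V :=
  [set z | forall v, (J u + (ip z (v - u)%R)%:E <= J v)%E].

Definition min_norm_subgrad (ip : V -> V -> R) (J : V -> \bar R) (u z : V) : Prop :=
  subdiff ip J u z /\ forall y, subdiff ip J u y -> `|z| <= `|y|.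

(* Brezis gradient-flow solution of  d/dt u + ∂J(u) ∋ 0, u(0) = f  on [0,oo) *)
Definition gradient_flow (ip : V -> V -> R) (J : V -> \bar R) (f : V) (u : R -> V) : Prop :=
  u 0 = f /\
  {within [set t : R | 0 <= t], continuous u} /\
  (forall d : R, 0 < d -> exists L : R, forall s t : R, d <= s -> d <= t ->
      `|u s - u t| <= L * `|s - t|) /\
  (forall t : R, 0 < t -> exists z : V, min_norm_subgrad ip J (u t) z /\
      (fun h : R => h^-1 *: (u (t + h) - u t)) @ 0^'+ --> - z).

Definition extinction_time (u : R -> V) (Tex : R) : Prop :=
  let S := [set T : R | 0 < T /\ forall t, T <= t -> u t = 0] in
  S !=set0 /\ Tex = inf S.

Definition scale_a (p Tex t : R) : R := (1 - t / Tex) `^ (1 / (2 - p)).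

End Setting.

From HB Require Import structures.
From mathcomp Require Import all_boot all_order all_algebra.
From mathcomp Require Import all_classical all_reals all_analysis.
From mathcomp Require Import ring lra.
Set Implicit Arguments. Unset Strict Implicit. Unset Printing Implicit Defensive.
Import Order.TTheory GRing.Theory Num.Theory.
Import numFieldNormedType.Exports.
Local Open Scope classical_set_scope.
Local Open Scope ring_scope.

(* Write Phi(t) = |u t|^(2-p).  For z in dJ(u), convexity and p-homogeneity give
   Euler's inequality p J(u) <= <z, u>, so along the flow the right derivative of
   Phi is at most -(2-p) Lambda(t).  Since u(t) stays in N(J)^perp \ {0} before
   extinction, Lambda >= lambda_1 and Phi(t) + (2-p) lambda_1 t is non-increasing.
   If Lambda(t0) > lambda_1, lower semicontinuity of J keeps Lambda above
   lambda_1 + eps on some [t0, b]; the decay estimate then gives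
   Phi(T) <= (2-p) (lambda_1 (Tex - T) - eps (b - t0)) < 0 for T close to
   Tex = Phi(0) / ((2-p) lambda_1), which is absurd.  Monotonicity is obtained from
   one-sided difference quotients by a Dini-type argument (real induction). *)

Section RealBounds.
Variable R : realType.

Lemma powR_le_tangent1 (th y : R) : 0 <= th <= 1 -> 0 <= y ->
  y `^ th <= 1 - th + th * y.
Proof.
move=> /andP[th0 th1] y0.
have [->|th_neq0] := eqVneq th 0; first by rewrite powRr0 subr0 mul0r addr0.
have [->|th_neq1] := eqVneq th 1; first by rewrite powRr1 // subrr mul1r add0r.
have th_gt0 : 0 < th by rewrite lt_neqAle eq_sym th_neq0.
have th_lt1 : 0 < 1 - th by rewrite subr_gt0 lt_neqAle th_neq1.
have := @conjugate_powR R (y `^ th) 1 th^-1 (1 - th)^-1 (powR_ge0 _ _) ler01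
  (ltac:(by rewrite invr_gt0)) (ltac:(by rewrite invr_gt0)) ltac:(by rewrite !invrK; ring).
rewrite mulr1 -powRrM mulfV ?gt_eqF // powRr1 // powR1 !invrK.
lra.
Qed.

Lemma powR_le_tangent (th x y : R) : 0 <= th <= 1 -> 0 < x -> 0 <= y ->
  y `^ th <= x `^ th + th * x `^ (th - 1) * (y - x).
Proof.
move=> th01 x0 y0.
have yx0 : 0 <= y / x by rewrite divr_ge0 // ltW.
have xth0 : 0 < x `^ th by apply: powR_gt0.
have -> : y `^ th = (y / x) `^ th * x `^ th.
  by rewrite -powRM // ?(ltW x0) // divfK // gt_eqF.
have -> : x `^ (th - 1) = x `^ th / x.
  by rewrite powRB ?powRr1 ?ltW //; apply/implyP => _; rewrite gt_eqF.
apply: le_trans (ler_wpM2r (ltW xth0) (powR_le_tangent1 th01 yx0)) _.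
by rewrite le_eqVlt; apply/orP; left; apply/eqP; field; rewrite gt_eqF.
Qed.

Lemma powR_sqr_half (x r : R) : 0 <= x -> x `^ r = (x ^+ 2) `^ (r / 2).
Proof.
move=> x0; rewrite -powR_mulrn // -powRrM; congr (_ `^ _).
by have -> : (2%:R : R) = 2 by []; field.
Qed.

Lemma continuous_powR (x r : R) : 0 < x -> {for x, continuous (fun y : R => y `^ r)}.
Proof.
move=> x0; apply: differentiable_continuous; apply/derivable1_diffP.
by have [] := @is_derive1_powR R r x x0.
Qed.

Lemma le0_of_le_small (x A : R) : 0 <= A ->
  (forall s, 0 < s < 1 -> x <= A * s) -> x <= 0.
Proof.
move=> A0 xA; apply/ler_addgt0Pr => e e0; rewrite add0r.
have d0 : 0 < A + 2 * e by lra.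
have s0 : 0 < e / (A + 2 * e) by rewrite divr_gt0.
have s1 : e / (A + 2 * e) < 1 by rewrite ltr_pdivrMr // mul1r; lra.
have := xA (e / (A + 2 * e)); rewrite s0 s1 => /(_ isT) /le_trans; apply.
rewrite mulrA ler_pdivrMr //; nra.
Qed.

Lemma EFin_lt_gap (x : R) (y : \bar R) : (x%:E < y)%E ->
  exists2 e : R, 0 < e & ((x + e)%:E < y)%E.
Proof.
case: y => [y | _ | //]; last by exists 1; rewrite ?ltey.
rewrite lte_fin => xy; exists ((y - x) / 2); first by rewrite divr_gt0 // subr_gt0.
by rewrite lte_fin; lra.
Qed.

End RealBounds.

Section RealInduction.
Variable R : realType.

Lemma real_induction (P : R -> Prop) (a b : R) : a <= b ->
  (forall c, a <= c <= b -> (forall r, a <= r < c -> P r) -> P c) ->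
  (forall c, a <= c < b -> (forall r, a <= r <= c -> P r) ->
     \forall r \near c^'+, P r) ->
  forall r, a <= r <= b -> P r.
Proof.
move=> ab left_closed right_open.
pose S := [set s | a <= s <= b /\ forall r, a <= r <= s -> P r].
have Pa : P a by apply: left_closed => [|r]; [rewrite lexx ab | lra].
have Sa : S a by split => [|r ra]; [rewrite lexx ab | have -> : r = a by lra].
have supS : has_sup S by split; [exists a | exists b => s [/andP[]]].
set c := sup S.
have ac : a <= c := sup_upper_bound supS Sa.
have cb : c <= b by apply: ge_sup => [|s [/andP[]]]; [exists a |].
have Pc : forall r, a <= r <= c -> P r.
  have Plt r : a <= r < c -> P r.
    move=> /andP[ar rc].
    have rc0 : 0 < c - r by rewrite subr_gt0.
    have [s [_ Ps] rs] := sup_adherent rc0 supS.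
    by apply: Ps; move: rs; rewrite -/c; lra.
  move=> r /andP[ar]; rewrite le_eqVlt => /orP[/eqP-> | rc].
    by apply: left_closed Plt; rewrite ac cb.
  by apply: Plt; rewrite ar rc.
have [c_lt_b | b_le_c] := ltP c b; last first.
  by move=> r /andP[ar rb]; apply: Pc; rewrite ar (le_trans rb b_le_c).
have [d /= d0 Pd] : \forall r \near c^'+, P r by apply: right_open Pc; rewrite ac.
pose e := Num.min d (b - c) / 2.
have e0 : 0 < e by rewrite divr_gt0 // lt_min d0 subr_gt0.
have ed : e < d by rewrite /e; have := ge_min d d (b - c); rewrite lexx /=; lra.
have eb : e <= b - c.
  by rewrite /e; have := ge_min (b - c) d (b - c); rewrite lexx orbT /=; lra.
suff /(sup_upper_bound supS) : S (c + e) by rewrite -/c; lra.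
split=> [|r /andP[ar rce]]; first lra.
have [rc | cr] := leP r c; first by apply: Pc; rewrite ar.
by apply: Pd => //=; rewrite ltr_distlC; lra.
Qed.

End RealInduction.

Lemma within_itv_cvg_dist_lt (R : realType) (k : R -> R) (a b t e : R) :
  k @ within `[a, b] (nbhs t) --> k t -> 0 < e ->
  exists2 d, 0 < d & forall s, a <= s <= b -> `|s - t| < d -> `|k s - k t| < e.
Proof.
move=> kt e0.
have /nbhs_ballP[d /= d0 kd] : \forall s \near t, s \in `[a, b] -> `|k t - k s| < e.
  exact: (cvgr_dist_lt k (k t) kt e e0).
exists d => // s sab st; rewrite distrC; apply: kd; last by rewrite in_itv.
by rewrite /ball /= distrC.
Qed.

Section RightDini.
Variables (R : realType) (k : R -> R) (a b : R).
Hypothesis ab : a <= b.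
Hypothesis kc : {within `[a, b], continuous k}.
Hypothesis kd : forall t, a < t < b -> forall eta, 0 < eta ->
  \forall h \near 0^'+, k (t + h) - k t <= eta * h.

Let kcP t e : a <= t <= b -> 0 < e -> exists2 d, 0 < d &
  forall s, a <= s <= b -> `|s - t| < d -> `|k s - k t| < e.
Proof.
move=> tab; apply: within_itv_cvg_dist_lt.
by have /subspace_continuousP := kc; apply; rewrite /= in_itv.
Qed.

(* The slack [eta] at [r = a] lets real induction leave [a], where no right
   derivative is available. *)
Let phi eta r := k a + eta * (r - a + 1).

Lemma right_dini_left_closed eta c : 0 < eta -> a <= c <= b ->
  (forall r, a <= r < c -> k r <= phi eta r) -> k c <= phi eta c.
Proof.
move=> eta_gt0 acb Pc; have /andP[ac cb] := acb; rewrite leNgt; apply/negP => gap.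
have [ca | a_neq_c] := eqVneq c a.
  by move: gap; rewrite /phi ca subrr add0r mulr1; lra.
have a_lt_c : a < c by rewrite lt_neqAle eq_sym a_neq_c.
have e0 : 0 < (k c - phi eta c) / 2 by lra.
have [d d0 kd'] := kcP acb e0.
pose s := Num.max a (c - d / 2).
have sa : a <= s by rewrite le_max lexx.
have sc : s < c by rewrite gt_max a_lt_c /=; lra.
have csd : c - d / 2 <= s by rewrite le_max lexx orbT.
have ks : k s <= phi eta s by apply: Pc; rewrite sa sc.
have : `|k s - k c| < (k c - phi eta c) / 2.
  apply: kd'; first by rewrite sa (le_trans (ltW sc) cb).
  by rewrite distrC ger0_norm ?subr_ge0 ?(ltW sc) //; lra.
rewrite ltr_distlC => /andP[_ kcs].
have : eta * (s - a + 1) <= eta * (c - a + 1) by rewrite ler_wpM2l ?ltW //; lra.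
by move: ks gap kcs; rewrite /phi; lra.
Qed.

Lemma right_dini_right_open eta c : 0 < eta -> a <= c < b ->
  (forall r, a <= r <= c -> k r <= phi eta r) -> \forall r \near c^'+, k r <= phi eta r.
Proof.
move=> eta_gt0 /andP[ac cb] Pc; have [ca | a_neq_c] := eqVneq c a.
  have [d d0 kd'] : exists2 d, 0 < d & forall s, a <= s <= b -> `|s - a| < d ->
      `|k s - k a| < eta by apply: kcP; rewrite ?lexx.
  rewrite ca; near=> r.
  have ar : a < r by near: r; exact: nbhs_right_gt.
  have rb : r < b by near: r; apply: nbhs_right_lt; rewrite -ca.
  have rd : r < a + d by near: r; apply: nbhs_right_lt; rewrite -ca; lra.
  have : `|k r - k a| < eta.
    by apply: kd'; rewrite ?(ltW ar) ?(ltW rb) // ger0_norm ?subr_ge0 ?(ltW ar); lra.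
  rewrite ltr_distlC => /andP[kra _].
  have : 0 <= eta * (r - a) by rewrite mulr_ge0 //; lra.
  by rewrite /phi; lra.
have a_lt_c : a < c by rewrite lt_neqAle eq_sym a_neq_c.
have acb : a < c < b by rewrite a_lt_c cb.
rewrite nbhs_right0P; apply: filterS _ (kd acb eta_gt0).
move=> h; have := Pc c; rewrite ac lexx => /(_ isT).
by rewrite /phi; lra.
Unshelve. all: by end_near.
Qed.

End RightDini.

Section RightDerivatives.
Variable R : realType.

Lemma right_dini_nonincr (k : R -> R) (a b : R) : a <= b ->
  {within `[a, b], continuous k} ->
  (forall t, a < t < b -> forall eta, 0 < eta ->
     \forall h \near 0^'+, k (t + h) - k t <= eta * h) ->
  k b <= k a.
Proof.
move=> ab kc kd; apply/ler_addgt0Pr => e e0.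
have ba1 : 0 < b - a + 1 by lra.
have eta0 : 0 < e / (b - a + 1) by rewrite divr_gt0.
have /(_ b) : forall r, a <= r <= b -> k r <= k a + e / (b - a + 1) * (r - a + 1).
  apply: real_induction => // c.
    exact: right_dini_left_closed.
  exact: right_dini_right_open.
by rewrite ab lexx divfK ?gt_eqF //; apply.
Qed.

Lemma rdiff_le_of_cvg (k B : R -> R) (t l eta : R) :
  (\forall h \near 0^'+, (k (t + h) - k t) / h <= B h) ->
  B @ 0^'+ --> l -> l < eta ->
  \forall h \near 0^'+, k (t + h) - k t <= eta * h.
Proof.
move=> kB Bl l_lt_eta; near=> h.
have h0 : 0 < h by near: h; exact: nbhs_right_gt.
have Bh : B h < eta by near: h; exact: cvgr_lt Bl _ l_lt_eta.
rewrite -ler_pdivrMr //; apply: le_trans _ (ltW Bh).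
by near: h.
Unshelve. all: by end_near.
Qed.

Lemma right_deriv0_eq (k : R -> R) (a b : R) : a <= b ->
  {within `[a, b], continuous k} ->
  (forall t, a < t < b -> (fun h => (k (t + h) - k t) / h) @ 0^'+ --> 0) ->
  k b = k a.
Proof.
move=> ab kc k'0; apply/eqP; rewrite eq_le; apply/andP; split.
  apply: right_dini_nonincr => // t tab eta eta0.
  by apply: rdiff_le_of_cvg _ (k'0 t tab) eta0; apply: nearW.
rewrite -lerN2; apply: (right_dini_nonincr (k := fun r => - k r)) => //.
  by move=> x; apply: cvgN; exact: kc.
move=> t tab eta eta0.
have kB : \forall h \near 0^'+, (- k (t + h) - - k t) / h <= - ((k (t + h) - k t) / h).
  by apply: nearW => h; rewrite -mulNr opprB opprK addrC.
by apply: (rdiff_le_of_cvg (k := fun r => - k r) kB (cvgN (k'0 t tab))); rewrite oppr0.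
Qed.

End RightDerivatives.

Lemma cvg_rdiff_right (R : realType) (V : normedModType R) (g : R -> V) (t : R) (z : V) :
  (fun h => h^-1 *: (g (t + h) - g t)) @ 0^'+ --> z ->
  (fun h => g (t + h)) @ 0^'+ --> g t.
Proof.
move=> gz.
have gE : \forall h \near 0^'+, g t + h *: (h^-1 *: (g (t + h) - g t)) = g (t + h).
  near=> h; have h0 : h != 0 by near: h; exact: nbhs_right_neq.
  by rewrite scalerA mulfV // scale1r addrC subrK.
apply: cvg_trans (near_eq_cvg gE) _.
have h0 : (fun h : R => h) @ 0^'+ --> (0 : R) by exact: cvg_at_right_filter cvg_id.
have : (fun h => g t + h *: (h^-1 *: (g (t + h) - g t))) @ 0^'+ --> g t + 0 *: z.
  by apply: cvgD; [exact: cvg_cst | exact: cvgZ h0 gz].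
by rewrite scale0r addr0.
Unshelve. all: by end_near.
Qed.

Section InnerProduct.
Variables (R : realType) (V : completeNormedModType R) (ip : V -> V -> R).
Hypothesis ipP : is_inner_product ip.

Lemma ipC u v : ip u v = ip v u. Proof. by case: ipP. Qed.

Lemma ipDl u v w : ip (u + v) w = ip u w + ip v w.
Proof. by case: ipP => _ []. Qed.

Lemma ipZl (c : R) u v : ip (c *: u) v = c * ip u v.
Proof. by case: ipP => _ [] _ []. Qed.

Lemma ipvv u : ip u u = `|u| ^+ 2.
Proof. by case: ipP => _ [] _ [] _ ->. Qed.

Lemma ipNl u v : ip (- u) v = - ip u v.
Proof. by rewrite -scaleN1r ipZl mulN1r. Qed.

Lemma ipBl u v w : ip (u - v) w = ip u w - ip v w.
Proof. by rewrite ipDl ipNl. Qed.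

Lemma ipDr u v w : ip w (u + v) = ip w u + ip w v.
Proof. by rewrite ipC ipDl ![ip _ w]ipC. Qed.

Lemma ipZr (c : R) u v : ip v (c *: u) = c * ip v u.
Proof. by rewrite ipC ipZl ipC. Qed.

Lemma ipNr u v : ip v (- u) = - ip v u.
Proof. by rewrite ipC ipNl ipC. Qed.

Lemma ipBr u v w : ip w (u - v) = ip w u - ip w v.
Proof. by rewrite ipDr ipNr. Qed.

Lemma ip_polarization u v : ip u v = (`|u + v| ^+ 2 - `|u - v| ^+ 2) / 4.
Proof.
rewrite -!ipvv !ipDl !ipDr !ipNl !ipNr (ipC v u).
by have -> : (4 : R) = 4%:R by []; field.
Qed.

Lemma cvg_ip {T} (F : set_system T) {FF : Filter F} (f g : T -> V) x y :
  f @ F --> x -> g @ F --> y -> (fun t => ip (f t) (g t)) @ F --> ip x y.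
Proof.
move=> fx gy; rewrite ip_polarization.
under eq_fun do rewrite ip_polarization.
apply: cvgM; last exact: cvg_cst.
by apply: cvgB; apply: cvgM; apply: cvg_norm;
  [apply: cvgD | apply: cvgD | apply: cvgB | apply: cvgB].
Qed.

Lemma cvg_sqr_norm_rdiff (g : R -> V) (t : R) (z : V) :
  (fun h => h^-1 *: (g (t + h) - g t)) @ 0^'+ --> z ->
  (fun h => (`|g (t + h)| ^+ 2 - `|g t| ^+ 2) / h) @ 0^'+ --> 2 * ip z (g t).
Proof.
move=> gz.
have qE : \forall h \near 0^'+, ip (h^-1 *: (g (t + h) - g t)) (g (t + h) + g t) =
    (`|g (t + h)| ^+ 2 - `|g t| ^+ 2) / h.
  by apply: nearW => h; rewrite ipZl ipBl !ipDr -!ipvv (ipC (g t)); ring.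
apply: cvg_trans (near_eq_cvg qE) _.
rewrite (_ : 2 * _ = ip z (g t + g t)); last by rewrite ipDr; ring.
by apply: cvg_ip => //; apply: cvgD; [exact: cvg_rdiff_right gz | exact: cvg_cst].
Qed.

End InnerProduct.

Section Functional.
Variables (R : realType) (V : completeNormedModType R) (p : R) (J : V -> \bar R).
Hypothesis JP : admissible_functional p J.

Lemma J_gtNy v : (-oo < J v)%E. Proof. by case: JP. Qed.

Lemma J_convex (u v : V) (t : R) : 0 < t < 1 ->
  (J ((1 - t) *: u + t *: v)%R <= (1 - t)%:E * J u + t%:E * J v)%E.
Proof. by case: JP => _ [_ [+ _]]; apply. Qed.

Lemma J_lsc v (a : R) : (a%:E < J v)%E -> \forall w \near v, (a%:E < J w)%E.
Proof. by case: JP => _ [_ [_ [+ _]]]; apply. Qed.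

Lemma J_homo (c : R) v : c != 0 -> J (c *: v) = ((`|c| `^ p)%:E * J v)%E.
Proof. by case: JP => _ [_ [_ [_ [_ [+ _]]]]]; apply. Qed.

Lemma J0 : J 0 = 0%E.
Proof. by case: JP => _ [_ [_ [_ [_ [_ ->]]]]]. Qed.

Lemma J_ge0 v : (0 <= J v)%E.
Proof.
have half : 0 < (1 / 2 : R) < 1 by lra.
have JN : J (- v) = J v.
  by rewrite -scaleN1r J_homo ?oppr_eq0 ?oner_eq0 // normrN normr1 powR1 mul1e.
have := J_convex v (- v) half.
have -> : (1 - 1 / 2) *: v + (1 / 2) *: - v = 0.
  by rewrite scalerN (_ : 1 - 1 / 2 = 1 / 2 :> R) ?subrr //; field.
rewrite J0 JN; have := J_gtNy v; case: (J v) => [r _| _ _ |//]; last by rewrite leey.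
by rewrite -!EFinM -EFinD !lee_fin; lra.
Qed.

Variable ip : V -> V -> R.

Lemma subdiff_fin v z : subdiff ip J v z -> exists j : R, J v = j%:E.
Proof.
move=> zJ; case: JP => _ [[w Jw] _].
move: (J_gtNy v) (zJ w); case: (J v) => [j _ _ | _ /= | //]; first by exists j.
by rewrite leye_eq => /eqP Jw'; move: Jw; rewrite Jw' ltxx.
Qed.

Hypothesis ipP : is_inner_product ip.
Hypothesis p12 : 1 <= p <= 2.

(* Test the subgradient inequality at (1 - s) v and let s -> 0. *)
Lemma subdiff_euler v z j : subdiff ip J v z -> J v = j%:E -> p * j <= ip z v.
Proof.
move=> zJ Jv; have /andP[p1 p2] := p12.
have j0 : 0 <= j by have := J_ge0 v; rewrite Jv lee_fin.
rewrite -subr_le0; apply: (@le0_of_le_small _ _ ((p - 1) * j)).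
  by rewrite mulr_ge0 // subr_ge0.
move=> s /andP[s0 s1]; move cE : (1 - s) => c.
have c0 : 0 < c by rewrite -cE subr_gt0.
have := zJ (c *: v).
rewrite Jv J_homo ?gt_eqF // Jv gtr0_norm // -EFinM -EFinD lee_fin.
rewrite (ipBr ipP) (ipZr ipP) -mulr_powRB1 ?(ltW c0) //; last lra.
have : c `^ (p - 1) <= 1 - (p - 1) + (p - 1) * c.
  by apply: powR_le_tangent1; [lra | exact: ltW].
move=> /(ler_wpM2l (ltW c0)) /(ler_wpM2r j0) cp zJc.
rewrite -(ler_pM2l s0); move: cp zJc; rewrite -cE; nra.
Qed.

(* Writing v + m = (1 - t) (v / (1 - t)) + t (m / t), convexity bounds J (v + m)
   by (1 - t)^(1 - p) J v, which tends to J v as t -> 0. *)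
Lemma subdiff_orth_null v z n : subdiff ip J v z -> J n = 0%E -> ip z n = 0.
Proof.
move=> zJ Jn; have /andP[p1 p2] := p12; have [j Jv] := subdiff_fin zJ.
have j0 : 0 <= j by have := J_ge0 v; rewrite Jv lee_fin.
suff le0 m : J m = 0%E -> ip z m <= 0.
  have JNn : J (- n) = 0%E.
    by rewrite -scaleN1r J_homo ?oppr_eq0 ?oner_eq0 // Jn mule0.
  have := le0 _ JNn; rewrite (ipNr ipP) oppr_le0 => ?.
  by apply/eqP; rewrite eq_le le0.
move=> Jm; apply: (@le0_of_le_small _ _ ((p - 1) * j)).
  by rewrite mulr_ge0 // subr_ge0.
move=> s /andP[s0 s1]; move tE : (s / 2) => t; move wE : (1 - t)^-1 => w.
have t01 : 0 < t < 1 by rewrite -tE; lra.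
have w0 : 0 < w by rewrite -wE invr_gt0 -tE; lra.
have wt : w * (1 - t) = 1 by rewrite -wE mulVf // gt_eqF // -tE; lra.
have ws : w - 1 <= s.
  have : (w - 1) * (1 - t) = t by rewrite mulrBl wt mul1r; ring.
  by rewrite -tE; nra.
have decomp : (1 - t) *: (w *: v) + t *: (t^-1 *: m) = v + m.
  rewrite !scalerA [(1 - t) * w]mulrC wt mulfV ?gt_eqF ?scale1r //.
  by case/andP: t01.
have := J_convex (w *: v) (t^-1 *: m) t01; rewrite decomp => /(le_trans (zJ _)).
have [tn0 wn0] : t != 0 /\ w != 0 by rewrite !gt_eqF //; case/andP: t01.
rewrite J_homo // Jv J_homo ?invr_eq0 //.
rewrite Jm !mule0 adde0 -!EFinM -EFinD lee_fin [v + m]addrC addrK gtr0_norm //.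
rewrite -mulr_powRB1 ?(ltW w0) //; last lra.
rewrite !mulrA [(1 - t) * w]mulrC wt mul1r => zJm.
have : w `^ (p - 1) <= 1 - (p - 1) + (p - 1) * w.
  by apply: powR_le_tangent1; [lra | exact: ltW].
move=> /(ler_wpM2r j0) wp.
have : (p - 1) * j * (w - 1) <= (p - 1) * j * s.
  by rewrite ler_wpM2l // mulr_ge0 // subr_ge0.
lra.
Qed.

End Functional.

Section Rayleigh.
Variables (R : realType) (V : completeNormedModType R) (p : R) (J : V -> \bar R).

Lemma rayleigh_gtE (L : R) v : v != 0 ->
  (L%:E < rayleigh p J v)%E = ((L * `|v| `^ p)%:E < p%:E * J v)%E.
Proof. by move=> v0; rewrite /rayleigh lte_pdivlMr ?EFinM // powR_gt0 ?normr_gt0. Qed.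

Lemma rayleigh_geE (L : R) v : v != 0 ->
  (L%:E <= rayleigh p J v)%E = ((L * `|v| `^ p)%:E <= p%:E * J v)%E.
Proof. by move=> v0; rewrite /rayleigh lee_pdivlMr ?EFinM // powR_gt0 ?normr_gt0. Qed.

Hypothesis JP : admissible_functional p J.

Lemma rayleigh_lsc (L : R) v : 0 < p -> v != 0 -> (L%:E < rayleigh p J v)%E ->
  \forall w \near v, (L%:E < rayleigh p J w)%E.
Proof.
move=> p_gt0 v0; rewrite rayleigh_gtE // => /EFin_lt_gap[e e0 LeJ].
have aJ : (((L * `|v| `^ p + e) / p)%:E < J v)%E.
  by rewrite -(@lte_pmul2l _ p%:E) ?lte_fin // -EFinM mulrCA divff ?gt_eqF ?mulr1.
have Lcont : (fun w : V => L * `|w| `^ p) @ v --> L * `|v| `^ p.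
  apply: cvgM; first exact: cvg_cst.
  apply: (@continuous_comp _ _ _ (fun w : V => `|w|) (fun y => y `^ p)).
    exact: norm_continuous.
  by apply: continuous_powR; rewrite normr_gt0.
near=> w.
have w0 : w != 0 by near: w; exact: (cvgr_neq0 v cvg_id v0).
rewrite rayleigh_gtE //; apply: (@lt_trans _ _ (L * `|v| `^ p + e)%:E).
  by rewrite lte_fin; near: w; apply: cvgr_lt Lcont _ _; rewrite ltrDl.
rewrite -(divfK (lt0r_neq0 p_gt0) (_ + _)) mulrC EFinM lte_pmul2l ?lte_fin //.
by near: w; exact: (J_lsc JP aJ).
Unshelve. all: by end_near.
Qed.

End Rayleigh.

Section GradientFlow.
Variables (R : realType) (V : completeNormedModType R) (ip : V -> V -> R).
Variables (p : R) (J : V -> \bar R) (f : V) (u : R -> V).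
Hypotheses (ipP : is_inner_product ip) (JP : admissible_functional p J).
Hypothesis p12 : 1 <= p < 2.
Hypotheses (fH0 : H0 ip J f) (uP : gradient_flow ip J f u).

Lemma flow0 : u 0 = f. Proof. by case: uP. Qed.

Lemma flow_continuous : {within [set t | 0 <= t], continuous u}.
Proof. by case: uP => _ []. Qed.

Lemma flow_continuous_at (t : R) : 0 <= t -> u @ within [set r | 0 <= r] (nbhs t) --> u t.
Proof. by move=> t0; have /subspace_continuousP := flow_continuous; apply. Qed.

Lemma flow_cvg_within_itv (a b r : R) : 0 <= a -> r \in `[a, b] ->
  u @ within `[a, b] (nbhs r) --> u r.
Proof.
move=> a0 rab.
have ab_nonneg : [set` `[a, b]] `<=` [set t : R | 0 <= t].
  by move=> x /=; rewrite in_itv => /andP[ax _]; exact: le_trans ax.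
by have /subspace_continuousP := continuous_subspaceW ab_nonneg flow_continuous; apply.
Qed.

Lemma flow_rderiv (t : R) : 0 < t -> exists z : V, subdiff ip J (u t) z /\
  (fun h => h^-1 *: (u (t + h) - u t)) @ 0^'+ --> - z.
Proof. by move=> t0; case: uP => _ [_ [_ /(_ t t0)[z [[zJ _] uz]]]]; exists z. Qed.

Lemma flow_norm_nonincr (s t : R) : 0 <= s <= t -> `|u t| <= `|u s|.
Proof.
move=> /andP[s0 st]; have /andP[p1 p2] := p12.
rewrite -ler_sqr ?nnegrE //.
apply: (right_dini_nonincr (k := fun r => `|u r| ^+ 2)) => //.
  apply/subspace_continuousP => r rst.
  by apply: cvgM; apply: cvg_norm; exact: flow_cvg_within_itv.
move=> r /andP[sr rt] eta eta0.
have [z [zJ uz]] := flow_rderiv (le_lt_trans s0 sr).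
apply: (rdiff_le_of_cvg (k := fun r => `|u r| ^+ 2) _ (cvg_sqr_norm_rdiff ipP uz)).
  exact: nearW.
have [j Jr] := subdiff_fin JP zJ.
have p12w : 1 <= p <= 2 by rewrite p1 ltW.
have := subdiff_euler JP ipP p12w zJ Jr.
have : 0 <= j by have := J_ge0 JP (u r); rewrite Jr lee_fin.
by rewrite (ipNl ipP); nra.
Qed.

Lemma flow_neq0 (Tex t : R) : extinction_time u Tex -> 0 <= t < Tex -> u t != 0.
Proof.
move=> [Sne TexE] /andP[t0 tT]; apply/negP => /eqP ut0.
have t_gt0 : 0 < t.
  rewrite lt_neqAle t0 andbT; apply/negP => /eqP t_eq0.
  by case: fH0; rewrite -flow0 t_eq0 ut0 eqxx.
set S := [set T | 0 < T /\ _] in Sne TexE.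
have St : S t.
  split=> // s ts; apply/eqP; rewrite -normr_le0 -(normr0 V) -ut0.
  by apply: flow_norm_nonincr; rewrite ltW.
have lbS : has_lbound S by exists 0 => x [/ltW].
by have := ge_inf lbS St; rewrite -TexE leNgt tT.
Qed.

Lemma flow_orth_null (t : R) n : 0 <= t -> J n = 0%E -> ip (u t) n = 0.
Proof.
move=> t0 Jn; have /andP[p1 p2] := p12.
have p12w : 1 <= p <= 2 by rewrite p1 ltW.
rewrite (right_deriv0_eq (k := fun r => ip (u r) n) t0) /= ?flow0.
- by case: fH0 => _ ->.
- apply/subspace_continuousP => r r0t.
  by apply: cvg_ip => //; [exact: flow_cvg_within_itv | exact: cvg_cst].
move=> r /andP[r0 rt]; have [z [zJ uz]] := flow_rderiv r0.
have qE : \forall h \near 0^'+, ip (h^-1 *: (u (r + h) - u r)) n = (ip (u (r + h)) n - ip (u r) n) / h.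
  by apply: nearW => h; rewrite (ipZl ipP) (ipBl ipP) mulrC.
apply: cvg_trans (near_eq_cvg qE) _.
have : (fun h => ip (h^-1 *: (u (r + h) - u r)) n) @ 0^'+ --> ip (- z) n.
  by apply: cvg_ip => //; exact: cvg_cst.
by rewrite (ipNl ipP) (subdiff_orth_null JP ipP p12w zJ Jn) oppr0.
Qed.

(* Concavity of x |-> x ^ ((2 - p) / 2) bounds the increments of |u|^(2-p) by those
   of |u|^2, whose right derivative -2 <z, u> is at most -2 p J(u) by Euler. *)
Lemma flow_energy_rdiff (L r : R) : 0 < r -> u r != 0 ->
  (L%:E <= rayleigh p J (u r))%E -> forall eta, 0 < eta ->
  \forall h \near 0^'+, (`|u (r + h)| `^ (2 - p) + (2 - p) * L * (r + h))
    - (`|u r| `^ (2 - p) + (2 - p) * L * r) <= eta * h.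
Proof.
move=> r0 ur0 Lray eta eta0; have /andP[p1 p2] := p12.
have p12w : 1 <= p <= 2 by rewrite p1 ltW.
have [z [zJ uz]] := flow_rderiv r0.
have [j Jr] := subdiff_fin JP zJ.
have euler := subdiff_euler JP ipP p12w zJ Jr.
move: Lray; rewrite rayleigh_geE // Jr -EFinM lee_fin => Lj.
have x0 : 0 < `|u r| ^+ 2 by rewrite exprn_gt0 // normr_gt0.
have powE s : `|u s| `^ (2 - p) = (`|u s| ^+ 2) `^ ((2 - p) / 2).
  exact: powR_sqr_half.
move cE : ((`|u r| ^+ 2) `^ ((2 - p) / 2 - 1)) => c.
have c0 : 0 <= c by rewrite -cE powR_ge0.
have cX : c * `|u r| `^ p = 1.
  rewrite -cE (powR_sqr_half p (normr_ge0 (u r))) -powRD; last first.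
    by rewrite (gt_eqF x0) implybT.
  have -> : (2 - p) / 2 - 1 + p / 2 = 0 by field.
  by rewrite powRr0.
have Lc : L <= c * ip z (u r).
  have : c * (L * `|u r| `^ p) <= c * ip z (u r) by rewrite ler_wpM2l //; lra.
  by rewrite mulrCA cX mulr1.
apply: (rdiff_le_of_cvg (k := fun s => `|u s| `^ (2 - p) + (2 - p) * L * s)
  (B := fun h => (2 - p) / 2 * c * ((`|u (r + h)| ^+ 2 - `|u r| ^+ 2) / h) + (2 - p) * L)).
- near=> h; have h0 : 0 < h by near: h; exact: nbhs_right_gt.
  rewrite !powE (_ : _ / h = ((`|u (r + h)| ^+ 2) `^ ((2 - p) / 2)
      - (`|u r| ^+ 2) `^ ((2 - p) / 2)) / h + (2 - p) * L); last by field; rewrite gt_eqF.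
  rewrite lerD2r mulrA ler_pM2r ?invr_gt0 // -cE.
  by rewrite lerBlDl; apply: powR_le_tangent => //; lra.
- apply: cvgD; last exact: cvg_cst.
  by apply: cvgM; [exact: cvg_cst | exact: (@cvg_sqr_norm_rdiff _ _ _ ipP u r (- z) uz)].
- by rewrite (ipNl ipP); nra.
Unshelve. all: by end_near.
Qed.

Lemma flow_decay (L a b : R) : 0 <= a <= b ->
  (forall r, a <= r <= b -> u r != 0) ->
  (forall r, a < r < b -> (L%:E <= rayleigh p J (u r))%E) ->
  `|u b| `^ (2 - p) + (2 - p) * L * b <= `|u a| `^ (2 - p) + (2 - p) * L * a.
Proof.
move=> /andP[a0 ab] u_neq0 Lray.
apply: (right_dini_nonincr (k := fun r => `|u r| `^ (2 - p) + (2 - p) * L * r)) => //.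
  apply/subspace_continuousP => r rab.
  apply: cvgD; last by apply: cvgM; [exact: cvg_cst | exact: cvg_within_filter cvg_id].
  apply: (@continuous_cvg _ _ _ _ _ u (fun v : V => `|v| `^ (2 - p))); last first.
    exact: flow_cvg_within_itv.
  apply: (continuous_comp (f := fun v : V => `|v|) (g := fun y => y `^ (2 - p))).
    exact: norm_continuous.
  by apply: continuous_powR; rewrite normr_gt0 u_neq0 // -in_itv.
move=> r /andP[ar rb]; apply: flow_energy_rdiff.
- exact: le_lt_trans ar.
- by apply: u_neq0; rewrite !ltW.
- by apply: Lray; rewrite ar rb.
Qed.

Variables (lam1 Tex : R).
Hypotheses (lam1E : lambda1 ip p J = lam1%:E) (TexP : extinction_time u Tex).

Lemma lambda1_le_rayleigh_flow (t : R) : 0 <= t < Tex ->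
  (lam1%:E <= rayleigh p J (u t))%E.
Proof.
move=> tT; rewrite -lam1E; apply: ereal_inf_lbound; exists (u t) => //.
split; first exact: flow_neq0 TexP tT.
by move=> n Jn; apply: flow_orth_null; case/andP: tT.
Qed.

Lemma flow_decay_lambda1 (s t : R) : 0 <= s <= t -> t < Tex ->
  `|u t| `^ (2 - p) + (2 - p) * lam1 * t <= `|u s| `^ (2 - p) + (2 - p) * lam1 * s.
Proof.
move=> /andP[s0 st] tT; apply: flow_decay; first by rewrite s0.
  move=> r /andP[sr rt]; apply: flow_neq0 TexP _.
  by rewrite (le_trans s0 sr) (le_lt_trans rt tT).
move=> r /andP[sr rt]; apply: lambda1_le_rayleigh_flow.
by rewrite (le_trans s0 (ltW sr)) (lt_trans rt (le_lt_trans _ tT)).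
Qed.

Lemma flow_rayleigh_above (L t : R) : 0 <= t < Tex -> (L%:E < rayleigh p J (u t))%E ->
  exists2 b, t < b < Tex & forall r, t < r < b -> (L%:E <= rayleigh p J (u r))%E.
Proof.
move=> tT Lt; have /andP[t0 t_lt_T] := tT; have /andP[p1 _] := p12.
have near_t : \forall r \near t, 0 <= r -> (L%:E < rayleigh p J (u r))%E.
  have p0 : 0 < p by lra.
  exact: flow_continuous_at t0 _ (rayleigh_lsc JP p0 (flow_neq0 TexP tT) Lt).
have /nbhs_ballP[d /= d0 dP] := near_t.
exists (Num.min (t + d / 2) ((t + Tex) / 2)).
  by rewrite lt_min gt_min; apply/andP; split; [apply/andP; split | apply/orP; right]; lra.
move=> r /andP[tr]; rewrite lt_min => /andP[rd _]; apply/ltW/dP; last lra.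
by rewrite /ball /= ltr_distlC; apply/andP; split; lra.
Qed.

Lemma rayleigh_flow_eq_lambda1 : 0 < lam1 ->
  Tex = `|f| `^ (2 - p) / ((2 - p) * lam1) ->
  forall t, 0 <= t < Tex -> rayleigh p J (u t) = lam1%:E.
Proof.
move=> lam1_gt0 TexE t tT; have /andP[t0 t_lt_T] := tT; have /andP[p1 p2] := p12.
apply/eqP; rewrite eq_le lambda1_le_rayleigh_flow // andbT leNgt.
apply/negP => /EFin_lt_gap[eps eps0 /(flow_rayleigh_above tT)[b /andP[tb bT] above]].
have decay_0t : `|u t| `^ (2 - p) + (2 - p) * lam1 * t
    <= `|u 0| `^ (2 - p) + (2 - p) * lam1 * 0.
  by apply: flow_decay_lambda1; rewrite ?lexx.
have decay_tb : `|u b| `^ (2 - p) + (2 - p) * (lam1 + eps) * b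
    <= `|u t| `^ (2 - p) + (2 - p) * (lam1 + eps) * t.
  apply: flow_decay; first by rewrite t0 ltW.
    move=> r /andP[tr rb]; apply: flow_neq0 TexP _.
    by rewrite (le_trans t0 tr) (le_lt_trans rb bT).
  by move=> r /andP[tr rb]; apply: above; rewrite tr rb.
have energy0 : `|u 0| `^ (2 - p) = (2 - p) * lam1 * Tex.
  by rewrite flow0 TexE mulrC divfK // mulf_neq0 ?gt_eqF // subr_gt0.
suff : eps * (b - t) <= 0 by rewrite pmulr_rle0 // subr_le0 leNgt tb.
apply: (le0_of_le_small (A := lam1 * (Tex - b))); first by rewrite mulr_ge0 //; lra.
move=> s /andP[s0 s1]; move TE : (Tex - s * (Tex - b)) => T.
have bT' : b <= T by rewrite -TE; nra.
have T_lt_Tex : T < Tex by rewrite -TE; nra.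
have decay_bT : `|u T| `^ (2 - p) + (2 - p) * lam1 * T
    <= `|u b| `^ (2 - p) + (2 - p) * lam1 * b.
  by apply: flow_decay_lambda1; rewrite ?bT' ?(le_trans t0 (ltW tb)).
(* the decay estimates on [0, t], [t, b] and [b, T] add up *)
suff : (2 - p) * (eps * (b - t) - lam1 * (Tex - T)) <= 0.
  by rewrite pmulr_rle0 ?subr_gt0 // subr_le0 -TE; lra.
have := powR_ge0 `|u T| (2 - p).
move: decay_0t decay_tb decay_bT; rewrite energy0; lra.
Qed.

End GradientFlow.

Theorem proposition6 (R : realType) (V : completeNormedModType R)
  (ip : V -> V -> R) (p : R) (J : V -> \bar R) (lam1 : R) (f : V) (u : R -> V) (Tex : R) :
  is_inner_product ip ->
  admissible_functional p J ->
  lambda1 ip p J = lam1%:E ->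
  0 < lam1 ->
  1 <= p < 2 ->
  H0 ip J f ->
  gradient_flow ip J f u ->
  extinction_time u Tex ->
  Tex = `|f| `^ (2 - p) / ((2 - p) * lam1) ->
  (exists (wstar : V) (tk : nat -> R),
      (forall k, 0 <= tk k < Tex) /\
      {homo tk : i j / (i <= j)%N >-> i <= j} /\
      tk @ \oo --> Tex /\
      (fun k => (scale_a p Tex (tk k))^-1 *: u (tk k)) @ \oo --> wstar) ->
  (forall t : R, 0 <= t < Tex -> rayleigh p J (u t) = lam1%:E) /\
  ground_state ip p J f.
Proof.
move=> ipP JP lam1E lam1_gt0 p12 fH0 uP TexP TexE _.
have rayleigh_eq := rayleigh_flow_eq_lambda1 ipP JP p12 fH0 uP lam1E TexP lam1_gt0 TexE.
have Tex_gt0 : 0 < Tex.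
  rewrite TexE divr_gt0 ?powR_gt0 ?normr_gt0 //; first by case: fH0.
  by rewrite mulr_gt0 // subr_gt0; case/andP: p12.
split=> //; split=> // v vH0.
by rewrite -(flow0 uP) rayleigh_eq ?lexx // -lam1E; apply: ereal_inf_lbound; exists v.
Qed.
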